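(* Let $\alpha_1,\dots,\alpha_n\in\mathcal R^n$ and consider the smooth representation $\bigoplus_{i=1}^n\chi^{\alpha_i}$ of $(\mathbb C^* )^n$ on $\mathbb C^n$. (1) It is faithful if and only if the $n\times n$ matrix with entries in $\mathcal R$ whose $(i,k)$-entry is $\alpha_i^k$ has an inverse with entries in $\mathcal R$. (2) If it is faithful, then the representation space has only finitely many orbits and has an open dense orbit; the open dense orbit is unique and isomorphic to $(\mathbb C^* )^n$, and every other orbit has real codimension at least two.
   Context: $\mathcal R$ is the ring of real $2\times2$ matrices $\begin{bmatrix} b&0\\ c&v\end{bmatrix}$ with $b,c\in\mathbb R$, $v\in\mathbb Z$, identified with $\mathbb C\times\mathbb Z$ via $(b+\sqrt{-1}c,v)$. For $g\in\mathbb C^*$ and $\mu=(b+\sqrt{-1}c,v)$, $g^\mu:=|g|^{b+\sqrt{-1}c}(g/|g|)^v$. For $\alpha=(\alpha^1,\dots,\alpha^n)\in\mathcal R^n$, $\chi^\alpha(g_1,\dots,g_n)=\prod_k g_k^{\alpha^k}$. The representation $\bigoplus_i\chi^{\alpha_i}$ acts on $\mathbb C^n$ by $g\cdot(z_1,\dots,z_n)=(\chi^{\alpha_1}(g)z_1,\dots,\chi^{\alpha_n}(g)z_n)$. Matrices over $\mathcal R$ are multiplied as usual (equivalently as real $2n\times 2n$ matrices). *)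

From HB Require Import structures.
From mathcomp Require Import all_boot all_order all_algebra.
From mathcomp Require Import all_classical all_reals.
From mathcomp Require Import topology normedtype sequences derive exp trigo.
From mathcomp Require Import complex.
Set Implicit Arguments. Unset Strict Implicit. Unset Printing Implicit Defensive.
Import Order.TTheory GRing.Theory Num.Theory.
Import numFieldTopology.Exports numFieldNormedType.Exports.
Local Open Scope ring_scope.
Local Open Scope complex_scope.

(* The usual (Euclidean) topology on C = R[i], the metric topology of its
   norm |x +i* y| = sqrt(x^2+y^2); C^n = 'rV[C]_n then carries the product
   topology (mathcomp-analysis' matrix topology). *)
HB.instance Definition _ (R : realType) :=
  PseudoPointedMetric.copy (complex R) (complex R)^o.

Section Defs.
Variable R : realType.
Local Notation C := (complex R).

(* An element (b + sqrt(-1) c, v) of \mathcal R, i.e. the real 2x2 matrix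
      [ b 0 ]
      [ c v ]   with b c : R and v : int. *)
Record Rel := mkRel { rb : R; rc : R; rv : int }.

Definition Rel_add (x y : Rel) : Rel :=
  mkRel (rb x + rb y) (rc x + rc y) (rv x + rv y).
(* matrix product [b 0; c v] [b' 0; c' v'] = [b b' 0; c b' + v c'  v v'] *)
Definition Rel_mul (x y : Rel) : Rel :=
  mkRel (rb x * rb y) (rc x * rb y + (rv x)%:~R * rc y) (rv x * rv y).
Definition Rel0 : Rel := mkRel 0 0 0.
Definition Rel1 : Rel := mkRel 1 0 1.

Definition Rmx (n : nat) := 'I_n -> 'I_n -> Rel.
Definition Rmx_mul n (A B : Rmx n) : Rmx n :=
  fun i k => \big[Rel_add/Rel0]_(j : 'I_n) Rel_mul (A i j) (B j k).
Definition Rmx1 n : Rmx n := fun i k => if i == k then Rel1 else Rel0.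
Definition Rmx_invertible n (A : Rmx n) : Prop :=
  exists B : Rmx n, Rmx_mul A B = @Rmx1 n /\ Rmx_mul B A = @Rmx1 n.

(* g^mu = |g|^(b + sqrt(-1) c) * (g/|g|)^v   for g <> 0, where
   |g|^(b + i c) = exp((b + i c) ln|g|) = e^(b ln|g|) (cos(c ln|g|) + i sin(c ln|g|)) *)
Definition cpowR (g : C) (mu : Rel) : C :=
  let r := ComplexField.Normc.normc g in let t := ln r in
  ((expR (rb mu * t))%:C * (cos (rc mu * t) +i* sin (rc mu * t)))
  * (g / r%:C) ^ (rv mu).

Definition torus (n : nat) : set ('I_n -> C) := [set g | forall k, g k != 0].
Arguments torus : clear implicits.

Definition chi n (alpha : 'I_n -> Rel) (g : 'I_n -> C) : C :=
  \prod_(k : 'I_n) cpowR (g k) (alpha k).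

(* the representation (+)_i chi^(alpha_i) of (C^* )^n; alpha i k = alpha_i^k *)
Definition rep n (alpha : Rmx n) (g : 'I_n -> C) : 'M[C]_n :=
  diag_mx (\row_i chi (alpha i) g).

Definition faithful_rep n (alpha : Rmx n) : Prop :=
  forall g h : 'I_n -> C,
    torus n g -> torus n h -> rep alpha g = rep alpha h -> g = h.

Definition tact n (alpha : Rmx n) (g : 'I_n -> C) (z : 'rV[C]_n) : 'rV[C]_n :=
  \row_i (chi (alpha i) g * z 0 i).

Definition torus_orbit n (alpha : Rmx n) (z : 'rV[C]_n) : set 'rV[C]_n :=
  [set tact alpha g z | g in torus n].

Definition torus_orbits n (alpha : Rmx n) : set (set 'rV[C]_n) :=
  [set torus_orbit alpha z | z in [set: 'rV[C]_n]].

(* One-parameter subgroups of (C^* )^n through the identity, spanning its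
   real Lie algebra R^(2n):  s |-> (1,..,e^s,..,1)  and  s |-> (1,..,e^(i s),..,1). *)
Definition opsub n (d : 'I_(n + n)) (s : R) : 'I_n -> C :=
  fun k => match fintype.split d with
           | inl j => if j == k then (expR s)%:C else 1
           | inr j => if j == k then cos s +i* sin s else 1
           end.

(* real coordinates of C^n = R^(n+n):  x_i = Re z_i,  x_(n+i) = Im z_i *)
Definition realcoord n (z : 'rV[C]_n) (e : 'I_(n + n)) : R :=
  match fintype.split e with inl i => complex.Re (z 0 i) | inr i => complex.Im (z 0 i) end.

(* Real Jacobian (at the identity) of the torus_orbit map g |-> g.z, in the
   coordinates above: row d = derivative along the d-th one-parameter subgroup. *)
Definition orbit_jacobian n (alpha : Rmx n) (z : 'rV[C]_n) : 'M[R]_(n + n) :=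
  \matrix_(d, e) derive1 (fun s : R => realcoord (tact alpha (opsub d s) z) e) 0.

(* real dimension of the torus_orbit through z = rank of the differential of the
   torus_orbit map at the identity; its real codimension in C^n = R^(n+n) *)
Definition orbit_dim n (alpha : Rmx n) (z : 'rV[C]_n) : nat :=
  \rank (orbit_jacobian alpha z).
Definition orbit_codim n (alpha : Rmx n) (z : 'rV[C]_n) : nat :=
  (n + n - orbit_dim alpha z)%N.

End Defs.
Arguments torus : clear implicits.

From HB Require Import structures.
From mathcomp Require Import all_boot all_order all_algebra.
From mathcomp Require Import all_classical all_reals.
From mathcomp Require Import topology normedtype sequences derive exp trigo.
From mathcomp Require Import complex.
From mathcomp Require Import lra zify.
Import Order.TTheory GRing.Theory Num.Theory.
Import numFieldTopology.Exports numFieldNormedType.Exports.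
Import ComplexField.Normc.
Set Implicit Arguments. Unset Strict Implicit. Unset Printing Implicit Defensive.
Local Open Scope ring_scope.
Local Open Scope classical_set_scope.

(* Write g in (C^* )^n in polar form g_k = e^(x_k) e^(i t_k).  If B, C, V are
   the real matrices of the three components of alpha (V integral), then
   chi^(alpha_i)(g) = e^((B x)_i) e^(i (C x + V t)_i).
   The character is multiplicative in the exponent, chi^(A B)(g) = chi^A(chi^B(g)),
   so an inverse of alpha over \mathcal R yields an inverse of the map
   g |-> (chi^(alpha_i)(g))_i: the representation is faithful and the torus
   acts transitively on each coordinate stratum {z | z_i = 0 <-> i in S}.
   Conversely, if the kernel is trivial then V t in 2 pi Z^n forces t in
   2 pi Z^n, so V is invertible with integral inverse; correcting the angle by
   - V^-1 C x then shows that B x = 0 forces x = 0.  Hence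
   (B^-1, - V^-1 C B^-1, V^-1) is an inverse of alpha over \mathcal R.
   The 2^n strata are the orbits; the stratum S = {} is open and dense, and on
   any other one some coordinate z_i vanishes identically, which kills two
   real coordinates of the orbit map. *)

Section Polar.
Variable R : realType.
Local Notation C := (complex R).
Local Open Scope complex_scope.

Definition expi (t : R) : C := cos t +i* sin t.

Lemma expiD s t : expi (s + t) = expi s * expi t.
Proof. by rewrite /expi cosD sinD; simpc; rewrite [_ + cos s * sin t]addrC. Qed.

Lemma expi0 : expi 0 = 1.
Proof. by rewrite /expi cos0 sin0. Qed.

Lemma expi2pi : expi (pi *+ 2) = 1.
Proof. by rewrite /expi cos2pi sin2pi. Qed.

Lemma expipi_neq1 : expi pi != 1.
Proof. by apply/eqP => /(congr1 (@complex.Re R)); rewrite /= cospi => h; lra. Qed.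

Lemma normc_expi t : normc (expi t) = 1.
Proof. by rewrite /normc /expi cos2Dsin2 sqrtr1. Qed.

Lemma ger0_normc (x : R) : 0 <= x -> normc x%:C = x.
Proof. by move=> x0; rewrite /normc /= expr0n addr0 sqrtr_sqr ger0_norm. Qed.

Lemma normc_gt0 (g : C) : g != 0 -> 0 < normc g.
Proof.
move=> g0; rewrite lt_def; apply/andP; split; last by case: g {g0} => a b; rewrite /normc sqrtr_ge0.
by apply/eqP => /eq0_normc; apply/eqP.
Qed.

Lemma normc1_neq0 (u : C) : normc u = 1 -> u != 0.
Proof. by move=> u1; apply/eqP => u0; move: u1; rewrite u0 normc0 => /eqP; rewrite eq_sym oner_eq0. Qed.

Lemma expi_neq0 t : expi t != 0.
Proof. exact/normc1_neq0/normc_expi. Qed.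

Lemma realC_eq0 (x : R) : (x%:C == 0 :> C) = (x == 0).
Proof. by apply/eqP/eqP => [[]|->]. Qed.

Lemma expRC_neq0 (x : R) : (expR x)%:C != 0 :> C.
Proof. by rewrite realC_eq0 gt_eqF ?expR_gt0. Qed.

Lemma expiN t : expi (- t) = (expi t)^-1.
Proof. by apply: (mulfI (expi_neq0 t)); rewrite -expiD subrr expi0 divff ?expi_neq0. Qed.

Lemma expiXz t (z : int) : expi t ^ z = expi (z%:~R * t).
Proof.
have expiXn (m : nat) : expi t ^+ m = expi (m%:R * t).
  elim: m => [|m IH]; first by rewrite expr0 mul0r expi0.
  by rewrite exprS IH -expiD -[in RHS](add1n m) natrD mulrDl mul1r.
case: z => m; first by rewrite -exprnP expiXn.
by rewrite NegzE -exprnN expiXn -expiN rmorphN /= mulNr.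
Qed.

Lemma prod_expi (I : finType) (f : I -> R) : \prod_i expi (f i) = expi (\sum_i f i).
Proof. by rewrite (big_morph expi expiD expi0). Qed.

Lemma prod_expRC (I : finType) (f : I -> R) :
  \prod_i (expR (f i))%:C = (expR (\sum_i f i))%:C :> C.
Proof.
apply: (big_ind2 (fun (a : C) (b : R) => a = (expR b)%:C)) => //; first by rewrite expR0.
by move=> a1 b1 a2 b2 -> ->; rewrite expRD rmorphM.
Qed.

Lemma normcXz (u : C) (z : int) : normc (u ^ z) = normc u ^ z.
Proof.
have normcXn (m : nat) : normc (u ^+ m) = normc u ^+ m.
  by elim: m => [|m IH]; rewrite ?expr0 ?normc1 // !exprS normcM IH.
case: z => m; first by rewrite -!exprnP normcXn.
by rewrite NegzE -!exprnN normcV normcXn.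
Qed.

Lemma cos_eq1 (r : R) : 0 <= r < pi *+ 2 -> cos r = 1 -> r = 0.
Proof.
move=> /andP[r0 r2pi] cr; have pi0 := pi_ge0 R.
have cos_inj0 (s : R) : 0 <= s <= pi -> cos s = 1 -> s = 0.
  move=> /andP[s0 spi] cs.
  by apply: cos_inj; rewrite ?in_itv /= ?s0 ?spi ?lexx ?pi0 ?cos0.
have [rpi|pir] := lerP r pi; first by apply: cos_inj0; rewrite ?r0.
suff : pi *+ 2 - r = 0 by move: r2pi; rewrite mulr2n => ? ?; lra.
apply: cos_inj0; last by rewrite addrC cosD2pi cosN.
by move: r2pi pir; rewrite mulr2n => ? ?; apply/andP; split; lra.
Qed.

Lemma expi_eq1 t : expi t = 1 -> t / (pi *+ 2) \is a Num.int.
Proof.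
move=> ht; have p0 : 0 < pi *+ 2 :> R by rewrite pmulrn_lgt0 // pi_gt0.
set m := Num.floor (t / (pi *+ 2)).
have /andP[mle tlt] := floor_itv (t / (pi *+ 2)).
rewrite -/m ler_pdivlMr // in mle.
rewrite ltr_pdivrMr // intrD mulrDl mul1r in tlt.
suff : t - m%:~R * (pi *+ 2) = 0.
  by move/eqP; rewrite subr_eq0 => /eqP ->; rewrite mulfK ?intr_int // gt_eqF.
apply: cos_eq1; first by rewrite subr_ge0 mle ltrBlDr addrC.
suff /(congr1 (@complex.Re R)) : expi (t - m%:~R * (pi *+ 2)) = 1 by [].
by rewrite expiD ht mul1r -mulNr -rmorphN /= -expiXz expi2pi exp1rz.
Qed.

Lemma cpowR_polar (x : R) (u : C) (mu : Rel R) : normc u = 1 ->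
  cpowR ((expR x)%:C * u) mu = (expR (rb mu * x))%:C * expi (rc mu * x) * u ^ rv mu.
Proof.
move=> u1; rewrite /cpowR normcM u1 mulr1 ger0_normc ?expR_ge0 // expRK.
by rewrite [_ * u]mulrC mulfK ?expRC_neq0.
Qed.

Definition polar n (x : 'I_n -> R) (u : 'I_n -> C) : 'I_n -> C :=
  fun k => (expR (x k))%:C * u k.

Lemma torus_polar n (g : 'I_n -> C) : torus R n g ->
  exists x u, (forall k, normc (u k) = 1) /\ g = polar x u.
Proof.
move=> tg; exists (fun k => ln (normc (g k))), (fun k => g k / (normc (g k))%:C).
have ng_gt0 k := normc_gt0 (tg k).
have ngC_neq0 k : (normc (g k))%:C != 0 :> C by rewrite realC_eq0 gt_eqF.
split=> [k|].
  by rewrite normcM normcV ger0_normc ?divff ?gt_eqF ?ltW.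
by apply: funext => k; rewrite /polar lnK ?posrE // mulrC divfK.
Qed.

Definition chi_logmod n (mu : 'I_n -> Rel R) (x : 'I_n -> R) : R :=
  \sum_k rb (mu k) * x k.

Definition chi_phase n (mu : 'I_n -> Rel R) (x : 'I_n -> R) (u : 'I_n -> C) : C :=
  expi (\sum_k rc (mu k) * x k) * \prod_k u k ^ rv (mu k).

Lemma chi_polar n (mu : 'I_n -> Rel R) x u : (forall k, normc (u k) = 1) ->
  chi mu (polar x u) = (expR (chi_logmod mu x))%:C * chi_phase mu x u.
Proof.
move=> u1; rewrite /chi /polar.
under eq_bigr do rewrite cpowR_polar //.
by rewrite !big_split /= prod_expRC prod_expi mulrA.
Qed.

Lemma normc_chi_phase n (mu : 'I_n -> Rel R) x u : (forall k, normc (u k) = 1) ->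
  normc (chi_phase mu x u) = 1.
Proof.
move=> u1; rewrite /chi_phase normcM normc_expi mul1r.
rewrite (big_morph (@normc R) (id1 := 1) (op1 := *%R)) ?normc1 //; last exact: normcM.
by rewrite big1 // => k _; rewrite normcXz u1 exp1rz.
Qed.

End Polar.

Section Composition.
Variable R : realType.
Local Notation C := (complex R).

Lemma rb_sum (I : Type) (r : seq I) (P : pred I) (F : I -> Rel R) :
  rb (\big[@Rel_add R/Rel0 R]_(i <- r | P i) F i) = \sum_(i <- r | P i) rb (F i).
Proof. exact: big_morph. Qed.

Lemma rc_sum (I : Type) (r : seq I) (P : pred I) (F : I -> Rel R) :
  rc (\big[@Rel_add R/Rel0 R]_(i <- r | P i) F i) = \sum_(i <- r | P i) rc (F i).
Proof. exact: big_morph. Qed.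

Lemma rv_sum (I : Type) (r : seq I) (P : pred I) (F : I -> Rel R) :
  rv (\big[@Rel_add R/Rel0 R]_(i <- r | P i) F i) = \sum_(i <- r | P i) rv (F i).
Proof. exact: big_morph. Qed.

Lemma prodrXz (I : Type) (r : seq I) (P : pred I) (F : I -> C) (z : int) :
  (\prod_(i <- r | P i) F i) ^ z = \prod_(i <- r | P i) F i ^ z.
Proof. by apply: (big_morph (fun y : C => y ^ z)); [move=> a b; rewrite expfzMl | rewrite exp1rz]. Qed.

Lemma prod_exprz (I : Type) (r : seq I) (P : pred I) (e : I -> int) (y : C) :
  y != 0 -> \prod_(i <- r | P i) y ^ e i = y ^ (\sum_(i <- r | P i) e i).
Proof.
move=> y0; symmetry; apply: (big_morph (fun k : int => y ^ k)); last exact: expr0z.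
by move=> a b; rewrite exprzDr // unitfE.
Qed.

Variable n : nat.
Implicit Types (A B : Rmx R n) (x : 'I_n -> R) (u g : 'I_n -> C).

Lemma chi_logmod_Rmx_mul A B i x :
  chi_logmod (Rmx_mul A B i) x = chi_logmod (A i) (fun j => chi_logmod (B j) x).
Proof.
rewrite /chi_logmod /Rmx_mul.
under eq_bigr do rewrite rb_sum /= mulr_suml.
rewrite exchange_big /=; apply: eq_bigr => j _.
by rewrite mulr_sumr; apply: eq_bigr => k _; rewrite mulrA.
Qed.

Lemma chi_phase_Rmx_mul A B i x u : (forall k, u k != 0) ->
  chi_phase (Rmx_mul A B i) x u =
  chi_phase (A i) (fun j => chi_logmod (B j) x) (fun j => chi_phase (B j) x u).
Proof.
move=> u0; rewrite /chi_phase.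
under [in RHS]eq_bigr do rewrite expfzMl expiXz prodrXz.
rewrite big_split /= prod_expi mulrA -expiD.
rewrite (exchange_big _ _ _ _ _ (fun j k => (u k ^ rv (B j k)) ^ rv (A i j))) /=.
congr (expi _ * _).
  rewrite /chi_logmod -big_split /=.
  under eq_bigr do rewrite rc_sum /= mulr_suml.
  rewrite exchange_big /=; apply: eq_bigr => j _.
  rewrite !mulr_sumr -big_split /=; apply: eq_bigr => k _.
  by rewrite mulrDl !mulrA.
apply: eq_bigr => k _.
rewrite rv_sum -prod_exprz //; apply: eq_bigr => j _.
by rewrite exprz_exp mulrC.
Qed.

Lemma chi_Rmx_mul A B i g : torus R n g ->
  chi (Rmx_mul A B i) g = chi (A i) (fun j => chi (B j) g).
Proof.
move=> /torus_polar[x [u [u1 ->]]].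
have u0 k : u k != 0 := normc1_neq0 (u1 k).
have -> : (fun j => chi (B j) (polar x u)) =
          polar (fun j => chi_logmod (B j) x) (fun j => chi_phase (B j) x u).
  by apply: funext => j; rewrite chi_polar.
rewrite !chi_polar //; last by move=> j; rewrite normc_chi_phase.
by rewrite chi_logmod_Rmx_mul chi_phase_Rmx_mul.
Qed.

Lemma chi_neq0 (mu : 'I_n -> Rel R) g : torus R n g -> chi mu g != 0.
Proof.
move=> /torus_polar[x [u [u1 ->]]].
by rewrite chi_polar // mulf_neq0 ?expRC_neq0 // normc1_neq0 ?normc_chi_phase.
Qed.

Lemma chi_Rmx1 i g : torus R n g -> chi (@Rmx1 R n i) g = g i.
Proof.
move=> tg; rewrite /chi (bigD1 i) //= /Rmx1 eqxx big1 ?mulr1.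
  rewrite /cpowR /= !mul0r mul1r cos0 sin0 expr1z mulr1.
  by rewrite lnK ?posrE ?normc_gt0 // mulrC divfK // realC_eq0 gt_eqF ?normc_gt0.
by move=> k /negbTE ki; rewrite eq_sym ki /cpowR /= !mul0r expR0 cos0 sin0 expr0z !mulr1.
Qed.

Definition torus_exp (x t : 'cV[R]_n) : 'I_n -> C :=
  polar (fun k => x k 0) (fun k => expi (t k 0)).

Lemma torus_exp_torus (x t : 'cV[R]_n) : torus R n (torus_exp x t).
Proof. by move=> k; rewrite mulf_neq0 ?expRC_neq0 ?expi_neq0. Qed.

Lemma torus_exp0 k : torus_exp 0 0 k = 1.
Proof. by rewrite /torus_exp /polar !mxE expR0 expi0 mulr1. Qed.

Lemma torus_exp_eq1 (x t : 'cV[R]_n) k : torus_exp x t k = 1 -> x k 0 = 0 /\ expi (t k 0) = 1.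
Proof.
move=> h; have x0 : x k 0 = 0.
  move/(congr1 (@normc R)): h.
  rewrite normcM normc_expi mulr1 ger0_normc ?expR_ge0 // normc1 => h.
  by rewrite -(expRK (x k 0)) h ln1.
by split=> //; move: h; rewrite /torus_exp /polar x0 expR0 mul1r.
Qed.

End Composition.

Section Components.
Variables (R : realType) (n : nat).
Local Open Scope complex_scope.
Implicit Types A B : Rmx R n.

Definition Rmx_b A : 'M[R]_n := \matrix_(i, k) rb (A i k).
Definition Rmx_c A : 'M[R]_n := \matrix_(i, k) rc (A i k).
Definition Rmx_v A : 'M[R]_n := \matrix_(i, k) (rv (A i k))%:~R.

Lemma Rmx_eq A B :
  Rmx_b A = Rmx_b B -> Rmx_c A = Rmx_c B -> Rmx_v A = Rmx_v B -> A = B.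
Proof.
move=> /matrixP eqb /matrixP eqc /matrixP eqv.
apply: funext => i; apply: funext => k.
move: (eqb i k) (eqc i k) (eqv i k); rewrite !mxE.
by case: (A i k) => ? ? ?; case: (B i k) => ? ? ? /= -> -> /intr_inj ->.
Qed.

Lemma Rmx_b_mul A B : Rmx_b (Rmx_mul A B) = Rmx_b A *m Rmx_b B.
Proof. by apply/matrixP => i k; rewrite !mxE rb_sum; apply: eq_bigr => j _; rewrite !mxE. Qed.

Lemma Rmx_c_mul A B :
  Rmx_c (Rmx_mul A B) = Rmx_c A *m Rmx_b B + Rmx_v A *m Rmx_c B.
Proof.
apply/matrixP => i k; rewrite !mxE rc_sum -big_split.
by apply: eq_bigr => j _; rewrite !mxE.
Qed.

Lemma Rmx_v_mul A B : Rmx_v (Rmx_mul A B) = Rmx_v A *m Rmx_v B.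
Proof.
apply/matrixP => i k; rewrite !mxE rv_sum rmorph_sum.
by apply: eq_bigr => j _; rewrite !mxE rmorphM.
Qed.

Lemma Rmx_b1 : Rmx_b (@Rmx1 R n) = 1%:M.
Proof. by apply/matrixP => i k; rewrite !mxE /Rmx1; case: (i == k). Qed.

Lemma Rmx_c1 : Rmx_c (@Rmx1 R n) = 0.
Proof. by apply/matrixP => i k; rewrite !mxE /Rmx1; case: (i == k). Qed.

Lemma Rmx_v1 : Rmx_v (@Rmx1 R n) = 1%:M.
Proof. by apply/matrixP => i k; rewrite !mxE /Rmx1; case: (i == k). Qed.

Lemma chi_torus_exp A i (x t : 'cV[R]_n) :
  chi (A i) (torus_exp x t) =
  torus_exp (Rmx_b A *m x) (Rmx_c A *m x + Rmx_v A *m t) i.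
Proof.
rewrite /torus_exp chi_polar; last by move=> k; exact: normc_expi.
rewrite /polar /chi_logmod /chi_phase.
under eq_bigr do rewrite expiXz.
rewrite prod_expi -expiD !mxE; congr ((expR _)%:C * expi (_ + _)).
- by apply: eq_bigr => k _; rewrite mxE.
- by apply: eq_bigr => k _; rewrite mxE.
- by apply: eq_bigr => k _; rewrite mxE.
Qed.

End Components.

Lemma nonunitmx_ker (F : fieldType) n (M : 'M[F]_n) :
  M \notin unitmx -> exists2 v : 'cV_n, v != 0 & M *m v = 0.
Proof.
rewrite -unitmx_tr unitmxE unitfE negbK => /det0P[v v0 hv].
by exists v^T; rewrite ?trmx_eq0 // -[M]trmxK -trmx_mul hv trmx0.
Qed.

Lemma col_neq0 (V : zmodType) n (v : 'cV[V]_n) : v != 0 -> exists k, v k 0 != 0.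
Proof.
move=> v0; apply/existsP; apply: contraNT v0 => /existsPn v0.
by apply/eqP/matrixP => k j; rewrite (ord1 j) mxE; exact/eqP/negbNE/v0.
Qed.

Section Faithfulness.
Variables (R : realType) (n : nat).
Local Notation C := (complex R).
Implicit Types alpha : Rmx R n.

Lemma eq_repP alpha g h :
  rep alpha g = rep alpha h <-> forall i, chi (alpha i) g = chi (alpha i) h.
Proof.
split => [/matrixP gh i | gh]; first by have := gh i i; rewrite !mxE eqxx !mulr1n.
by congr diag_mx; apply/rowP => i; rewrite !mxE.
Qed.

Lemma invertible_faithful alpha : Rmx_invertible alpha -> faithful_rep alpha.
Proof.
move=> [B [_ BA]] g h tg th /eq_repP gh; apply: funext => i.
rewrite -(chi_Rmx1 i tg) -(chi_Rmx1 i th) -BA (chi_Rmx_mul _ _ _ tg) (chi_Rmx_mul _ _ _ th).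
by congr (chi _ _); apply: funext => j.
Qed.

Lemma invertible_chi_surj alpha : Rmx_invertible alpha ->
  forall w, torus R n w -> exists2 g, torus R n g & forall i, chi (alpha i) g = w i.
Proof.
move=> [B [AB _]] w tw; exists (fun j => chi (B j) w) => [j|i].
  exact: chi_neq0.
by rewrite -chi_Rmx_mul // AB chi_Rmx1.
Qed.

Variable alpha : Rmx R n.
Hypothesis faithful : faithful_rep alpha.
Local Notation Bm := (Rmx_b alpha).
Local Notation Cm := (Rmx_c alpha).
Local Notation Vm := (Rmx_v alpha).

Lemma faithful_kernel (x t : 'cV[R]_n) :
  Bm *m x = 0 -> (forall i, expi ((Cm *m x + Vm *m t) i 0) = 1) ->
  forall k, torus_exp x t k = 1.
Proof.
move=> Bx ht k; suff -> : torus_exp x t = torus_exp (0 : 'cV[R]_n) 0 by exact: torus_exp0.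
apply: faithful; [exact: torus_exp_torus.. |]; apply/eq_repP => i.
by rewrite !chi_torus_exp Bx !mulmx0 addr0 /torus_exp /polar ht mxE expi0.
Qed.

Lemma Rmx_v_unit : Vm \in unitmx.
Proof.
apply/negPn/negP => /nonunitmx_ker[y y0 Vy]; have [k yk] := col_neq0 y0.
pose t := (pi / y k 0) *: y.
have ht i : expi ((Cm *m 0 + Vm *m t) i 0) = 1.
  by rewrite mulmx0 add0r -scalemxAr Vy scaler0 mxE expi0.
have [_] := torus_exp_eq1 (faithful_kernel (mulmx0 _ _) ht k).
by rewrite mxE mulfVK //; apply/eqP; exact: expipi_neq1.
Qed.

Lemma Rmx_b_unit : Bm \in unitmx.
Proof.
apply/negPn/negP => /nonunitmx_ker[x x0 Bx].
pose t := - (invmx Vm *m (Cm *m x)).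
have ht i : expi ((Cm *m x + Vm *m t) i 0) = 1.
  by rewrite mulmxN mulKVmx ?Rmx_v_unit // subrr mxE expi0.
move/eqP: x0; apply; apply/matrixP => k j; rewrite (ord1 j) mxE.
exact: (torus_exp_eq1 (faithful_kernel Bx ht k)).1.
Qed.

Lemma Rmx_v_inv_int i k : invmx Vm i k \is a Num.int.
Proof.
pose t : 'cV[R]_n := (pi *+ 2) *: (invmx Vm *m delta_mx k 0).
have ht j : expi ((Cm *m 0 + Vm *m t) j 0) = 1.
  rewrite mulmx0 add0r -scalemxAr mulKVmx ?Rmx_v_unit // !mxE eqxx andbT.
  by case: (j == k); rewrite ?mulr1 ?mulr0 ?expi2pi ?expi0.
have [_ /expi_eq1] := torus_exp_eq1 (faithful_kernel (mulmx0 _ _) ht i).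
by rewrite mxE -colE mxE [pi *+ 2 * _]mulrC mulfK // gt_eqF // pmulrn_lgt0 ?pi_gt0.
Qed.

Definition Rmx_inv : Rmx R n := fun i k =>
  mkRel (invmx Bm i k) ((- (invmx Vm *m Cm *m invmx Bm)) i k) (Num.floor (invmx Vm i k)).

Lemma Rmx_b_inv : Rmx_b Rmx_inv = invmx Bm.
Proof. by apply/matrixP => i k; rewrite mxE. Qed.

Lemma Rmx_c_inv : Rmx_c Rmx_inv = - (invmx Vm *m Cm *m invmx Bm).
Proof. by apply/matrixP => i k; rewrite [LHS]mxE. Qed.

Lemma Rmx_v_inv : Rmx_v Rmx_inv = invmx Vm.
Proof. by apply/matrixP => i k; rewrite mxE floorK ?Rmx_v_inv_int. Qed.

Lemma faithful_invertible : Rmx_invertible alpha.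
Proof.
have Bu := Rmx_b_unit; have Vu := Rmx_v_unit.
exists Rmx_inv; split; apply: Rmx_eq;
  rewrite ?(Rmx_b_mul, Rmx_c_mul, Rmx_v_mul) ?(Rmx_b_inv, Rmx_c_inv, Rmx_v_inv)
          ?(Rmx_b1, Rmx_c1, Rmx_v1).
- exact: mulmxV.
- by rewrite mulmxN !mulmxA mulmxV // mul1mx subrr.
- exact: mulmxV.
- exact: mulVmx.
- by rewrite mulNmx -!mulmxA mulVmx // mulmx1 addNr.
- exact: mulVmx.
Qed.

End Faithfulness.

Lemma mxrank_two_zero_cols (F : fieldType) m k (M : 'M[F]_(m, k)) (c1 c2 : 'I_k) :
  c1 != c2 -> (forall a, M a c1 = 0) -> (forall a, M a c2 = 0) -> (\rank M <= k - 2)%N.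
Proof.
move=> c12 Mc1 Mc2; pose S : {set 'I_k} := [set c1; c2]%SET.
pose D : 'M[F]_k := \sum_(c in ~: S) delta_mx c c.
have DE j b : D j b = ((j == b) && (b \in ~: S))%:R.
  rewrite summxE; under eq_bigr => c _ do rewrite mxE.
  have [bS|bNS] := boolP (b \in ~: S).
    rewrite (bigD1 b) //= eqxx andbT big1 ?addr0 ?andbT // => c /andP[_ cb].
    by rewrite [b == c]eq_sym (negbTE cb) andbF.
  rewrite big1 ?andbF // => c cS; case: (b =P c) => [bc|]; last by rewrite andbF.
  by move: bNS; rewrite bc cS.
have MD : M *m D = M.
  apply/matrixP => a b; rewrite mxE (bigD1 b) //= big1 ?addr0 => [|j /negbTE jb]; last first.
    by rewrite DE jb mulr0.
  rewrite DE eqxx /=; have [|] := boolP (b \in ~: S); first by rewrite mulr1.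
  by rewrite !inE negbK => /orP[] /eqP ->; rewrite mulr0 ?Mc1 ?Mc2.
have rankD : (\rank D <= #|~: S|)%N.
  rewrite -sum1_card; apply: (big_ind2 (fun (A : 'M[F]_k) (x : nat) => \rank A <= x)%N).
  - by rewrite mxrank0.
  - by move=> A1 x1 A2 x2 r1 r2; apply: leq_trans (mxrank_add _ _) (leq_add r1 r2).
  - by move=> c _; rewrite mxrank_delta.
have cardCS : #|~: S| = (k - 2)%N.
  by have := cardsC S; rewrite cards2 c12 card_ord; lia.
by rewrite -MD -cardCS; apply: leq_trans (mxrankM_maxr _ _) rankD.
Qed.

Section Orbits.
Variables (R : realType) (n : nat).
Local Notation C := (complex R).

Definition nonvanishing : set 'rV[C]_n := [set y | forall i, y 0 i != 0].

Definition stratum (p : {ffun 'I_n -> bool}) : set 'rV[C]_n :=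
  [set y | forall i, (y 0 i == 0) = p i].

Definition zero_pattern (z : 'rV[C]_n) : {ffun 'I_n -> bool} := [ffun i => z 0 i == 0].

Lemma nonvanishing_const1 : nonvanishing (const_mx 1).
Proof. by move=> i; rewrite mxE oner_neq0. Qed.

Lemma nbhs_nonvanishing (y : 'rV[C]_n) (B : set 'rV[C]_n) :
  nbhs y B -> exists2 y', B y' & nonvanishing y'.
Proof.
move=> /nbhs_ballP[e e0 yeB].
exists (\row_i (if y 0 i == 0 then e / 2 else y 0 i)) => [|i]; last first.
  rewrite mxE; case: ifP => [_|/negbT //].
  by rewrite mulf_neq0 ?invr_eq0 ?lt0r_neq0 // ltr0n.
apply: yeB; split => // i j; rewrite (ord1 i) mxE.
case: ifP => [/eqP ->|_]; last by rewrite /ball /= subrr normr0.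
rewrite /ball /= sub0r normrN ger0_norm; last by rewrite divr_ge0 ?ltW // ler0n.
by have := (midf_lt e0).2; rewrite add0r.
Qed.

Lemma open_nonvanishing : open nonvanishing.
Proof.
rewrite openE => y ny; rewrite /interior.
apply: (@filter_forall _ 'I_n (fun i => [set y' : 'rV[C]_n | y' 0 i != 0]) (nbhs y)) => i.
apply/nbhs_ballP; exists `|y 0 i|; first by rewrite /= normr_gt0.
move=> y' [_ /(_ 0 i) yy']; apply/eqP => y'0.
by move: yy'; rewrite /ball /= y'0 subr0 ltxx.
Qed.

Lemma closure_nonvanishing : closure nonvanishing = setT.
Proof.
apply/seteqP; split => // y _ B /nbhs_nonvanishing[y' By' ny'].
by exists y'.
Qed.

Lemma faithful_tact_const1 (alpha : Rmx R n) : faithful_rep alpha ->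
  forall g h, torus R n g -> torus R n h ->
  tact alpha g (const_mx 1) = tact alpha h (const_mx 1) -> g = h.
Proof.
move=> faithful g h tg th /matrixP gh; apply: faithful => //; apply/eq_repP => i.
by have := gh 0 i; rewrite !mxE !mulr1.
Qed.

Variable alpha : Rmx R n.
Hypothesis invertible : Rmx_invertible alpha.

Lemma torus_orbitE z : torus_orbit alpha z = stratum (zero_pattern z).
Proof.
apply/seteqP; split => [y [g tg <-] i|y yz].
  by rewrite ffunE mxE mulf_eq0 (negbTE (chi_neq0 _ tg)).
pose w i := if z 0 i == 0 then 1 else y 0 i / z 0 i.
have tw : torus R n w.
  move=> i; rewrite /w; case: ifP => zi; first exact: oner_neq0.
  by rewrite mulf_neq0 ?invr_eq0 ?yz ?ffunE ?zi.
have [g tg gw] := invertible_chi_surj invertible tw.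
exists g => //; apply/rowP => i; rewrite mxE gw /w.
have := yz i; rewrite ffunE; case: ifP => [/eqP -> /eqP ->|zi _].
  by rewrite mulr0.
by rewrite divfK ?zi.
Qed.

Lemma finite_torus_orbits : finite_set (torus_orbits alpha).
Proof.
apply: (@sub_finite_set _ _ (range stratum)); last first.
  exact/finite_image/finite_finset.
by move=> _ [z _ <-]; rewrite torus_orbitE; exists (zero_pattern z).
Qed.

Lemma torus_orbit_nonvanishing z : nonvanishing z -> torus_orbit alpha z = nonvanishing.
Proof.
move=> nz; rewrite torus_orbitE; apply/seteqP; split => y /= yz i.
  by have := yz i; rewrite ffunE (negbTE (nz i)) => ->.
by rewrite ffunE (negbTE (nz i)) (negbTE (yz i)).
Qed.

Lemma open_torus_orbit z : open (torus_orbit alpha z) -> torus_orbit alpha z = nonvanishing.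
Proof.
move=> oOz; have Oz : torus_orbit alpha z z by rewrite torus_orbitE => i; rewrite ffunE.
have [y Oy ny] := nbhs_nonvanishing (oOz z Oz).
apply: torus_orbit_nonvanishing => i; move: Oy; rewrite torus_orbitE => /(_ i).
by rewrite ffunE (negbTE (ny i)) => /esym/negbT.
Qed.

Lemma torus_orbit_vanishing z : torus_orbit alpha z <> nonvanishing -> exists i, z 0 i = 0.
Proof.
move=> Oz; apply: contrapT => nz; apply/Oz/torus_orbit_nonvanishing => i.
by apply/eqP => zi; apply: nz; exists i.
Qed.

End Orbits.

Section Codimension.
Variables (R : realType) (n : nat) (alpha : Rmx R n).
Local Notation C := (complex R).

Lemma orbit_jacobian_col0 (z : 'rV[C]_n) e :
  (forall g, realcoord (tact alpha g z) e = 0) -> forall d, orbit_jacobian alpha z d e = 0.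
Proof.
move=> z0 d; rewrite mxE (_ : (fun s => _) = cst 0) ?derive1_cst //.
by apply: funext => s; rewrite z0.
Qed.

Lemma orbit_codim_ge2 (z : 'rV[C]_n) i : z 0 i = 0 -> (2 <= orbit_codim alpha z)%N.
Proof.
move=> zi; have tact0 g : tact alpha g z 0 i = 0 by rewrite mxE zi mulr0.
have col0 e : fintype.split e = inl i \/ fintype.split e = inr i ->
    forall d, orbit_jacobian alpha z d e = 0.
  by move=> ie; apply: orbit_jacobian_col0 => g; rewrite /realcoord; case: ie => ->; rewrite tact0.
have lr : lshift n i != rshift n i by apply/eqP => /(congr1 val) /=; have := ltn_ord i; lia.
have := mxrank_two_zero_cols lr (col0 _ (or_introl (unsplitK (inl i))))
  (col0 _ (or_intror (unsplitK (inr i)))).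
by rewrite /orbit_codim /orbit_dim; have := ltn_ord i; lia.
Qed.

End Codimension.

Theorem lemma2p5 (R : realType) (n : nat) (alpha : Rmx R n) :
  (faithful_rep alpha <-> Rmx_invertible alpha) /\
  (faithful_rep alpha ->
     finite_set (torus_orbits alpha) /\
     exists z : 'rV[complex R]_n,
       [/\ open (torus_orbit alpha z), closure (torus_orbit alpha z) = setT,
           (forall z' : 'rV[complex R]_n,
              open (torus_orbit alpha z') -> closure (torus_orbit alpha z') = setT ->
              torus_orbit alpha z' = torus_orbit alpha z),
           (forall g h : 'I_n -> complex R, torus R n g -> torus R n h ->
              tact alpha g z = tact alpha h z -> g = h)
         & (forall z' : 'rV[complex R]_n,
              torus_orbit alpha z' <> torus_orbit alpha z -> (2 <= orbit_codim alpha z')%N)]).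
Proof.
have faithfulE : faithful_rep alpha <-> Rmx_invertible alpha.
  by split; [exact: faithful_invertible | exact: invertible_faithful].
split=> // faithful; have invertible := faithfulE.1 faithful.
split; first exact: finite_torus_orbits.
exists (const_mx 1); rewrite torus_orbit_nonvanishing //; last exact: nonvanishing_const1.
split.
- exact: open_nonvanishing.
- exact: closure_nonvanishing.
- by move=> z' /open_torus_orbit ->.
- exact: faithful_tact_const1.
- by move=> z' /torus_orbit_vanishing[// | i /orbit_codim_ge2].
Qed.
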